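(* Let $q\ge0$. For every $X\in\mathcal{X}_{k,q+1}$, \[ \|X(T)\|_H^2+\sum_{i=0}^{N-1}\int_{I_i}\big\|A^{\frac12}\Pi_i^{(q)}X(s)-A^{-\frac12}\dot X(s)\big\|_H^2\,\mathrm{d}s=|X|_{\mathcal{X}_{k,q+1}}^2 , \] where \[ |X|_{\mathcal{X}_{k,q+1}}^2=\|X(0)\|_H^2+\sum_{i=0}^{N-1}\int_{I_i}\Big(\|A^{\frac12}\Pi_i^{(q)}X\|_H^2+\|A^{-\frac12}\dot X\|_H^2\Big)\,\mathrm{d}s . \]
   Context: Let $V\hookrightarrow H\hookrightarrow V^*$ be a Gelfand triple of real separable Hilbert spaces, with $V$ densely embedded in $H$. Let $A:V\to V^*$ be the operator associated with a symmetric, bounded, coercive bilinear form on $V$, with fractional powers defined as usual. For $\gamma\in\mathbb{R}$, $\dot H^\gamma=D(A^{\gamma/2})$ with norm $\|A^{\gamma/2}\cdot\|_H$, so $\dot H^1=V$ and $\dot H^{-1}=V^*$ with equivalent norms. Let $0=t_0<t_1<\dots<t_N=T$, $I_i=[t_i,t_{i+1}]$. Let $\mathcal{X}_{k,q+1}$ be the set of $X\in L^2((0,T);V)\cap H^1((0,T);V^* )$ (hence continuous into $H$) whose restriction to each $I_i$ is a polynomial in $t$ of degree at most $q+1$ with coefficients in $\dot H^1$. On $I_i$, $\Pi_i^{(q)}$ denotes the $L^2(I_i)$-orthogonal projection onto polynomials in $t$ of degree at most $q$. *)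

From HB Require Import structures.
From mathcomp Require Import all_boot all_order all_algebra.
From mathcomp Require Import all_classical all_reals all_analysis.
Set Implicit Arguments. Unset Strict Implicit. Unset Printing Implicit Defensive.
Import Order.TTheory GRing.Theory Num.Theory.
Local Open Scope classical_set_scope.
Local Open Scope ring_scope.

Section Defs.
Variables (R : realType) (H : lmodType R).

Definition inner_product (ip : H -> H -> R) : Prop :=
  [/\ (forall x y, ip x y = ip y x),
      (forall (a : R) x y z, ip (a *: x + y) z = a * ip x z + ip y z),
      (forall x, 0 <= ip x x) &
      (forall x, ip x x = 0 -> x = 0)].

Definition subspace (D : set H) : Prop :=
  D 0 /\ (forall (a : R) x y, D x -> D y -> D (a *: x + y)).

Definition inner_product_on (D : set H) (ip : H -> H -> R) : Prop :=
  [/\ (forall x y, D x -> D y -> ip x y = ip y x),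
      (forall (a : R) x y z, D x -> D y -> D z ->
          ip (a *: x + y) z = a * ip x z + ip y z),
      (forall x, D x -> 0 <= ip x x) &
      (forall x, D x -> ip x x = 0 -> x = 0)].

Definition complete_on (D : set H) (ip : H -> H -> R) : Prop :=
  forall u : nat -> H, (forall n, D (u n)) ->
    (forall e : R, 0 < e -> exists n0, forall m n, (n0 <= m)%N -> (n0 <= n)%N ->
        ip (u m - u n) (u m - u n) < e) ->
    exists l, D l /\ forall e : R, 0 < e -> exists n0, forall n, (n0 <= n)%N ->
        ip (u n - l) (u n - l) < e.

Definition separable_on (D : set H) (ip : H -> H -> R) : Prop :=
  exists u : nat -> H, (forall n, D (u n)) /\
    forall x, D x -> forall e : R, 0 < e -> exists n, ip (x - u n) (x - u n) < e.

(* Gelfand triple V -> H -> V^* of real separable Hilbert spaces, V a dense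
   subspace of H, continuously embedded; a is a symmetric bounded coercive
   bilinear form on V. *)
Definition gelfand_form (ip : H -> H -> R) (V : set H) (ipV : H -> H -> R)
  (a : H -> H -> R) : Prop :=
  [/\ [/\ inner_product ip, complete_on setT ip & separable_on setT ip],
      subspace V,
      [/\ inner_product_on V ipV, complete_on V ipV, separable_on V ipV,
          (forall x e, 0 < e -> exists v, V v /\ ip (x - v) (x - v) < e) &
          (exists C : R, 0 < C /\ forall v, V v -> ip v v <= C * ipV v v)] &
      [/\ (forall u v, V u -> V v -> a u v = a v u),
          (forall (c : R) u v w, V u -> V v -> V w ->
              a (c *: u + v) w = c * a u w + a v w),
          (exists M : R, 0 < M /\ forall u v, V u -> V v ->
              `|a u v| <= M * Num.sqrt (ipV u u) * Num.sqrt (ipV v v)) &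
          (exists al : R, 0 < al /\ forall v, V v -> al * ipV v v <= a v v)]].

(* S is A^{1/2}: the nonnegative self-adjoint square root of the operator A
   associated with a, i.e. the linear operator with domain V that is
   symmetric, nonnegative, onto H (hence self-adjoint) and satisfies
   (S u, S v)_H = a(u, v) on V.  Values of S outside V are irrelevant. *)
Definition is_sqrtA (ip : H -> H -> R) (V : set H) (a : H -> H -> R)
  (S : H -> H) : Prop :=
  [/\ (forall (c : R) u v, V u -> V v -> S (c *: u + v) = c *: S u + S v),
      (forall u v, V u -> V v -> ip (S u) (S v) = a u v),
      (forall u v, V u -> V v -> ip (S u) v = ip u (S v)),
      (forall u, V u -> 0 <= ip (S u) u) &
      (forall h, exists u, V u /\ S u = h)].

Definition is_invsqrtA (V : set H) (S Si : H -> H) : Prop :=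
  forall h, V (Si h) /\ S (Si h) = h.

Definition poly_eval (c : nat -> H) (n : nat) (s : R) : H :=
  \sum_(j < n) (s ^+ j) *: c j.

Definition poly_deriv (c : nat -> H) (n : nat) (s : R) : H :=
  \sum_(j < n) ((j%:R : R) * s ^+ j.-1) *: c j.

Definition integral_ab (a b : R) (f : R -> R) : R :=
  Rintegral (@lebesgue_measure R) `[a, b] f.

(* p (coefficients p 0..q) is the L^2(a,b;H)-orthogonal projection of X onto
   the polynomials of degree <= q with coefficients in H *)
Definition is_L2proj (ip : H -> H -> R) (a b : R) (q : nat) (X : R -> H)
  (p : nat -> H) : Prop :=
  forall (k : nat) (w : H), (k <= q)%N ->
    integral_ab a b (fun s => ip (X s - poly_eval p q.+1 s) w * s ^+ k) = 0.

End Defs.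

(** On each interval write p = Pi X and x' = dX/ds.  Since A^{-1/2} maps H
    into V and A^{1/2} is symmetric on V, expanding the square gives
    |A^{1/2} p - A^{-1/2} x'|^2 = |A^{1/2} p|^2 + |A^{-1/2} x'|^2 - 2 (p, x').
    As x' has degree <= q, the projection property gives
    int (p, x') = int (x, x') = (|x(t_{i+1})|^2 - |x(t_i)|^2) / 2, and the sum
    over the intervals telescopes.  Every integrand is a real polynomial in s
    (a Gram polynomial of the coefficient vectors), which provides both the
    integrability and the fundamental theorem of calculus. *)

From Pilot Require Import Defs.
From HB Require Import structures.
From mathcomp Require Import all_boot all_order all_algebra.
From mathcomp Require Import all_classical all_reals all_analysis.
From mathcomp Require Import ring.
Import Order.TTheory GRing.Theory Num.Theory.
Import numFieldNormedType.Exports.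
Set Implicit Arguments. Unset Strict Implicit.

Local Open Scope classical_set_scope.
Local Open Scope ring_scope.

Section InnerProduct.
Variables (R : realType) (H : lmodType R) (ip : H -> H -> R).
Hypothesis ipP : inner_product ip.

Lemma ipC x y : ip x y = ip y x.
Proof. by case: ipP. Qed.

Lemma ipDl x y z : ip (x + y) z = ip x z + ip y z.
Proof. by case: ipP => _ lin _ _; rewrite -{1}[x]scale1r lin mul1r. Qed.

Lemma ip0l z : ip 0 z = 0.
Proof. by apply/(addIr (ip 0 z)); rewrite -ipDl !add0r. Qed.

Lemma ipZl k x z : ip (k *: x) z = k * ip x z.
Proof. by case: ipP => _ lin _ _; rewrite -[k *: x]addr0 lin ip0l addr0. Qed.

Lemma ipBl x y z : ip (x - y) z = ip x z - ip y z.
Proof. by rewrite ipDl -scaleN1r ipZl mulN1r. Qed.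

Lemma ipZr k x z : ip z (k *: x) = k * ip z x.
Proof. by rewrite ipC ipZl ipC. Qed.

Lemma ipBr x y z : ip z (x - y) = ip z x - ip z y.
Proof. by rewrite ipC ipBl !(ipC z). Qed.

Lemma ip_suml I (r : seq I) (F : I -> H) z :
  ip (\sum_(i <- r) F i) z = \sum_(i <- r) ip (F i) z.
Proof. by rewrite (big_morph (ip^~ z) (fun x y => ipDl x y z) (ip0l z)). Qed.

Lemma ip_sumr I (r : seq I) (F : I -> H) z :
  ip z (\sum_(i <- r) F i) = \sum_(i <- r) ip z (F i).
Proof. by rewrite ipC ip_suml; apply: eq_bigr => i _; rewrite ipC. Qed.

Lemma ip_normB x y : ip (x - y) (x - y) = ip x x + ip y y - 2 * ip x y.
Proof. rewrite ipBl !ipBr (ipC y x); ring. Qed.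

Definition ip_poly (u : nat -> H) (n : nat) (w : H) : {poly R} :=
  \sum_(j < n) ip (u j) w *: 'X^j.

Definition gram_poly (u : nat -> H) (n : nat) (v : nat -> H) (m : nat) :
  {poly R} := \sum_(k < m) ip_poly u n (v k) * 'X^k.

Lemma horner_ip_poly u n w s : (ip_poly u n w).[s] = ip (poly_eval u n s) w.
Proof.
rewrite horner_sum ip_suml; apply: eq_bigr => j _.
by rewrite hornerZ hornerXn ipZl mulrC.
Qed.

Lemma horner_deriv_ip_poly u n w s :
  (ip_poly u n w)^`().[s] = ip (poly_deriv u n s) w.
Proof.
rewrite linear_sum horner_sum ip_suml; apply: eq_bigr => j _.
by rewrite linearZ /= derivXn hornerZ hornerMn hornerXn ipZl -mulr_natl mulrC.
Qed.

Lemma horner_gram_poly u n v m s :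
  (gram_poly u n v m).[s] = ip (poly_eval u n s) (poly_eval v m s).
Proof.
rewrite horner_sum [in RHS]/poly_eval ip_sumr; apply: eq_bigr => k _.
by rewrite hornerM horner_ip_poly hornerXn ipZr mulrC.
Qed.

Lemma horner_deriv_gram_poly u n v m s :
  (gram_poly u n v m)^`().[s] =
  ip (poly_deriv u n s) (poly_eval v m s) + ip (poly_eval u n s) (poly_deriv v m s).
Proof.
rewrite linear_sum horner_sum [poly_eval v m s]/poly_eval [poly_deriv v m s]/poly_deriv.
rewrite !ip_sumr -big_split; apply: eq_bigr => k _ /=.
rewrite derivM hornerD !hornerM horner_deriv_ip_poly horner_ip_poly.
by rewrite derivXn hornerMn !hornerXn !ipZr -mulr_natl; ring.
Qed.

End InnerProduct.

Lemma poly_deriv_shift (R : realType) (H : lmodType R) (u : nat -> H) n s :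
  poly_deriv u n.+1 s = poly_eval (fun j => j.+1%:R *: u j.+1) n s.
Proof.
rewrite /poly_deriv big_ord_recl mul0r scale0r add0r.
by apply: eq_bigr => j _; rewrite scalerA mulrC.
Qed.

Section PolyIntegral.
Variables (R : realType) (a b : R).

Definition poly_integral (p : {poly R}) : R := integral_ab a b (horner p).

Lemma horner_integrable (p : {poly R}) :
  (@lebesgue_measure R).-integrable `[a, b] (EFin \o horner p).
Proof.
apply: continuous_compact_integrable; first exact: segment_compact.
by apply: continuous_subspaceT; exact: continuous_horner.
Qed.

Lemma poly_integral_eq_on (p : {poly R}) (f : R -> R) :
  (forall s, a <= s <= b -> p.[s] = f s) -> poly_integral p = integral_ab a b f.
Proof. by move=> pf; apply: eq_Rintegral => s; rewrite inE /= in_itv; exact: pf. Qed.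

Lemma poly_integral_is_scalar : scalar poly_integral.
Proof.
move=> k p r; rewrite /poly_integral /integral_ab.
have -> : horner (k *: p + r) = (fun s => k * p.[s] + r.[s]).
  by apply/funext => s; rewrite hornerD hornerZ.
rewrite RintegralD ?RintegralZl //; try exact: horner_integrable.
apply: (eq_integrable _ _ _ _ (horner_integrable (k *: p))) => // s _.
by rewrite /= hornerZ.
Qed.

HB.instance Definition _ :=
  GRing.isLinear.Build R {poly R} R *%R poly_integral poly_integral_is_scalar.

Lemma poly_integral_deriv (p : {poly R}) : a < b ->
  poly_integral p^`() = p.[b] - p.[a].
Proof.
move=> ab; rewrite /poly_integral /integral_ab /Rintegral.
rewrite (@continuous_FTC2 R (horner p^`()) (horner p) a b ab) //.
- by apply: continuous_subspaceT; exact: continuous_horner.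
- split.
  + by move=> x _; exact: derivable_horner.
  + by apply: cvg_at_right_filter; exact: continuous_horner.
  + by apply: cvg_at_left_filter; exact: continuous_horner.
- by move=> x _; rewrite derivE.
Qed.

End PolyIntegral.

Section LinearOnSubspace.
Variables (R : realType) (H : lmodType R) (D : set H) (L : H -> H).
Hypothesis D_subspace : Defs.subspace D.
Hypothesis L_linear :
  forall (k : R) u v, D u -> D v -> L (k *: u + v) = k *: L u + L v.

Lemma subspace_poly_eval u n s :
  (forall j, (j < n)%N -> D (u j)) -> D (poly_eval u n s).
Proof.
have [D0 Dlin] := D_subspace.
elim: n => [|n IHn] Du; first by rewrite /poly_eval big_ord0.
rewrite /poly_eval big_ord_recr /= addrC; apply: Dlin; first exact: Du.
by apply: IHn => j /ltnW; exact: Du.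
Qed.

Lemma linear_on_poly_eval u n s :
  (forall j, (j < n)%N -> D (u j)) -> L (poly_eval u n s) = poly_eval (L \o u) n s.
Proof.
have [D0 Dlin] := D_subspace.
elim: n => [|n IHn] Du.
  have := @L_linear 1 0 0 D0 D0; rewrite scaler0 addr0 scale1r => L00.
  by rewrite /poly_eval !big_ord0; apply/(addIr (L 0)); rewrite add0r -L00.
have Dun : D (u n) by exact: Du.
have Du' j : (j < n)%N -> D (u j) by move/ltnW; exact: Du.
rewrite {1}/poly_eval big_ord_recr /= addrC L_linear //; last exact: subspace_poly_eval.
by rewrite -/(poly_eval u n s) IHn // addrC /poly_eval big_ord_recr.
Qed.

End LinearOnSubspace.

Section SquareRoot.
Variables (R : realType) (H : lmodType R) (ip : H -> H -> R) (V : set H)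
  (ipV : H -> H -> R) (form : H -> H -> R) (Ah Amh : H -> H).
Hypothesis gelfand : gelfand_form ip V ipV form.
Hypothesis sqrtA : is_sqrtA ip V form Ah.
Hypothesis invsqrtA : is_invsqrtA V Ah Amh.

Lemma sqrtA_eq0 w : V w -> Ah w = 0 -> w = 0.
Proof.
case: gelfand => [[ipP _ _] _ [[_ _ ipV_ge0 ipV_def] _ _ _ _]
                  [_ _ _ [al [al_gt0 coercive]]]].
case: sqrtA => _ sqrtA_form _ _ _ Vw Aw0.
apply: ipV_def => //; apply/eqP; rewrite eq_le ipV_ge0 // andbT.
by rewrite -(pmulr_rle0 _ al_gt0) -(ip0l ipP 0) -Aw0 sqrtA_form // coercive.
Qed.

Lemma invsqrtA_linear (k : R) u v : Amh (k *: u + v) = k *: Amh u + Amh v.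
Proof.
case: gelfand => _ [_ Vlin] _ _; case: sqrtA => Ah_linear _ _ _ _.
have [[Vu Au] [Vv Av]] := (invsqrtA u, invsqrtA v).
have [Vuv Auv] := invsqrtA (k *: u + v).
have Vr : V (k *: Amh u + Amh v) by apply: Vlin.
suff : (-1) *: Amh (k *: u + v) + (k *: Amh u + Amh v) = 0.
  by move/eqP; rewrite scaleN1r addrC subr_eq0 => /eqP ->.
apply: sqrtA_eq0; first exact: Vlin.
by rewrite !Ah_linear // Au Av Auv scaleN1r addNr.
Qed.

Lemma ip_sqrtA_invsqrtA u h : V u -> ip (Ah u) (Amh h) = ip u h.
Proof.
case: sqrtA => _ _ Ah_sym _ _ Vu; have [VAmh AAmh] := invsqrtA h.
by rewrite Ah_sym // AAmh.
Qed.

End SquareRoot.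

Section L2Projection.
Variables (R : realType) (H : lmodType R) (ip : H -> H -> R).
Hypothesis ipP : inner_product ip.
Variables (a b : R) (q : nat) (X : R -> H) (c P : nat -> H).
Hypothesis X_poly : forall s, a <= s <= b -> X s = poly_eval c q.+2 s.
Hypothesis P_proj : is_L2proj ip a b q X P.

Lemma L2proj_orthogonal (v : nat -> H) :
  poly_integral a b (gram_poly ip c q.+2 v q.+1 - gram_poly ip P q.+1 v q.+1) = 0.
Proof.
rewrite -sumrB linear_sum big1 // => k _.
rewrite -(P_proj (v k) (ltn_ord k)); apply: poly_integral_eq_on => s /X_poly ->.
by rewrite hornerD hornerN !hornerM hornerXn !horner_ip_poly // ipBl // mulrBl.
Qed.

End L2Projection.

Section Interval.
Variables (R : realType) (H : lmodType R) (ip : H -> H -> R) (V : set H)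
  (ipV : H -> H -> R) (form : H -> H -> R) (Ah Amh : H -> H).
Variables (a b : R) (q : nat) (X : R -> H) (c P : nat -> H).
Hypothesis gelfand : gelfand_form ip V ipV form.
Hypothesis sqrtA : is_sqrtA ip V form Ah.
Hypothesis invsqrtA : is_invsqrtA V Ah Amh.
Hypothesis X_poly : forall s, a <= s <= b -> X s = poly_eval c q.+2 s.
Hypothesis P_proj : is_L2proj ip a b q X P.
Hypothesis P_in_V : forall j, (j <= q)%N -> V (P j).
Hypothesis ab : a < b.

Let ipP : inner_product ip. Proof. by case: gelfand => -[]. Qed.

Lemma energy_identity_on_interval :
  integral_ab a b (fun s =>
      ip (Ah (poly_eval P q.+1 s) - Amh (poly_deriv c q.+2 s))
         (Ah (poly_eval P q.+1 s) - Amh (poly_deriv c q.+2 s)))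
  = integral_ab a b (fun s =>
      ip (Ah (poly_eval P q.+1 s)) (Ah (poly_eval P q.+1 s))
    + ip (Amh (poly_deriv c q.+2 s)) (Amh (poly_deriv c q.+2 s)))
    - (ip (X b) (X b) - ip (X a) (X a)).
Proof.
have [_ V_subspace _ _] := gelfand; have [Ah_linear _ _ _ _] := sqrtA.
pose dc j := j.+1%:R *: c j.+1.
have xdE s : poly_deriv c q.+2 s = poly_eval dc q.+1 s := poly_deriv_shift c q.+1 s.
have VP s : V (poly_eval P q.+1 s) by apply: subspace_poly_eval => // j; exact: P_in_V.
have AhE s : Ah (poly_eval P q.+1 s) = poly_eval (Ah \o P) q.+1 s.
  by apply: (linear_on_poly_eval V_subspace) => // j; exact: P_in_V.
have AmhE s : Amh (poly_deriv c q.+2 s) = poly_eval (Amh \o dc) q.+1 s.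
  rewrite xdE; apply: (linear_on_poly_eval (D := setT)) => // k u v _ _.
  exact: (invsqrtA_linear gelfand sqrtA invsqrtA).
pose G := gram_poly ip (Ah \o P) q.+1 (Ah \o P) q.+1
        + gram_poly ip (Amh \o dc) q.+1 (Amh \o dc) q.+1.
pose Q := gram_poly ip c q.+2 c q.+2.
pose E := gram_poly ip c q.+2 dc q.+1 - gram_poly ip P q.+1 dc q.+1.
have -> : integral_ab a b (fun s =>
      ip (Ah (poly_eval P q.+1 s)) (Ah (poly_eval P q.+1 s))
    + ip (Amh (poly_deriv c q.+2 s)) (Amh (poly_deriv c q.+2 s)))
    = poly_integral a b G.
  symmetry; apply: poly_integral_eq_on => s _.
  by rewrite hornerD !horner_gram_poly // AhE AmhE.
(* The cross term -2 (p, x') is split as -(|x|^2)' + 2 (x - p, x'). *)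
have -> : integral_ab a b (fun s =>
      ip (Ah (poly_eval P q.+1 s) - Amh (poly_deriv c q.+2 s))
         (Ah (poly_eval P q.+1 s) - Amh (poly_deriv c q.+2 s)))
    = poly_integral a b (G - Q^`() + 2 *: E).
  symmetry; apply: poly_integral_eq_on => s _.
  rewrite ip_normB // (ip_sqrtA_invsqrtA sqrtA invsqrtA) // AhE AmhE.
  rewrite !(hornerD, hornerN, hornerZ) horner_deriv_gram_poly //.
  rewrite !horner_gram_poly // -xdE.
  by rewrite (ipC ipP (poly_deriv c q.+2 s)); ring.
rewrite linearD linearB linearZ /= (L2proj_orthogonal ipP X_poly P_proj).
rewrite poly_integral_deriv //.
by rewrite !horner_gram_poly // -!X_poly ?lexx ?(ltW ab) //; ring.
Qed.

End Interval.

Theorem lemma5p1 (R : realType) (H : lmodType R)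
  (ip : H -> H -> R) (V : set H) (ipV : H -> H -> R) (a : H -> H -> R)
  (Ah Amh : H -> H)
  (hG : gelfand_form ip V ipV a) (hS : is_sqrtA ip V a Ah)
  (hSi : is_invsqrtA V Ah Amh)
  (N : nat) (t : nat -> R) (T : R)
  (ht0 : t 0%N = 0) (htN : t N = T)
  (hmono : forall i, (i < N)%N -> t i < t i.+1)
  (q : nat)
  (X : R -> H) (c : nat -> nat -> H)
  (hcV : forall i j, (i < N)%N -> (j <= q.+1)%N -> V (c i j))
  (hX : forall i s, (i < N)%N -> t i <= s <= t i.+1 ->
          X s = poly_eval (c i) q.+2 s)
  (P : nat -> nat -> H)
  (hPV : forall i j, (i < N)%N -> (j <= q)%N -> V (P i j))
  (hP : forall i, (i < N)%N -> is_L2proj ip (t i) (t i.+1) q X (P i)) :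
  ip (X T) (X T)
  + \sum_(i < N) integral_ab (t i) (t i.+1) (fun s =>
        ip (Ah (poly_eval (P i) q.+1 s) - Amh (poly_deriv (c i) q.+2 s))
           (Ah (poly_eval (P i) q.+1 s) - Amh (poly_deriv (c i) q.+2 s)))
  = ip (X 0) (X 0)
  + \sum_(i < N) integral_ab (t i) (t i.+1) (fun s =>
        ip (Ah (poly_eval (P i) q.+1 s)) (Ah (poly_eval (P i) q.+1 s))
      + ip (Amh (poly_deriv (c i) q.+2 s)) (Amh (poly_deriv (c i) q.+2 s))).
Proof.
under eq_bigr => i _ do rewrite (energy_identity_on_interval hG hS hSi
  (fun s => hX i s (ltn_ord i)) (hP i (ltn_ord i)) (fun j => hPV i j (ltn_ord i))
  (hmono i (ltn_ord i))).
pose normX i := ip (X (t i)) (X (t i)).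
rewrite sumrB -(big_mkord xpredT (fun i => normX i.+1 - normX i)) telescope_sumr //.
by rewrite /normX htN ht0; ring.
Qed.
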